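(* Let $(X^t)_{t\ge 0}$ be the random walk on $G_{m,n}$ started at the identity and driven by the OST shuffle $OST_{m,n}$, and let $Y^t=(X^t)^{-1}$. For $j\in[n]$, let $T_j$ be the first time at which position $j$ is selected on the first draw of the shuffle (i.e. the first step in which the chosen index $j$ equals the given $j$). If $T_j\le t$, then $(Y^t)$ satisfies property $\mathcal{P}_j$ at time $t$, namely \[\mathbb{P}\bigl(Y^t(j)=x \mid Y^t(i)\text{ for all } j<i\le n\bigr)=\begin{cases}\frac{1}{mj}, & x\in\mathcal{G}^t_j,\\ 0,&\text{otherwise,}\end{cases}\] where $\mathcal{G}^t_j=\{\xi^k i: i\in[n],k\in\mathbb{Z}_m\}\setminus\{Y^t(\xi^k i): j<i\le n,\ k\in\mathbb{Z}_m\}$.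
   Context: Let $\xi$ be a primitive $m$-th root of unity and $[n]=\{1,\dots,n\}$. The generalized symmetric group $G_{m,n}$ is the group of bijections $\varphi$ of $\{\xi^k i: i\in[n],k\in\mathbb{Z}_m\}$ with $\varphi(\xi^k i)=\xi^k\varphi(i)$; equivalently tuples $(\xi^{k_1},\dots,\xi^{k_n},\sigma)$, $\sigma\in S_n$, acting by $i\mapsto \xi^{k_i}\sigma(i)$, with multiplication $(\xi^{k_1},\dots,\xi^{k_n},\sigma)(\xi^{k_1'},\dots,\xi^{k_n'},\sigma')=(\xi^{k_1}\xi^{k'_{\sigma(1)}},\dots,\xi^{k_n}\xi^{k'_{\sigma(n)}},\sigma\sigma')$. Elements are interpreted as arrangements of a deck of $n$ cards, each in one of $m$ orientations. For $1\le i\le j\le n$, $k\in\mathbb{Z}_m$, let $g_{i,j,k}$ have permutation part the transposition $(ij)$ (identity if $i=j$) and tuple with $\xi^k$ in positions $i$ and $j$ and $1$ elsewhere. One step of the OST shuffle: choose $j$ uniformly in $[n]$ (the ''first draw''), then $i$ uniformly in $[j]$, and $k$ uniformly in $\mathbb{Z}_m$, independently, and multiply by $g_{i,j,k}$; so each triple has probability $\frac{1}{njm}$. For $\varphi\in G_{m,n}$ one writes $\varphi(\xi^k i)=\xi^k\varphi(i)$. *)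

From mathcomp Require Import all_boot all_order all_algebra all_fingroup.
Set Implicit Arguments. Unset Strict Implicit. Unset Printing Implicit Defensive.
Import Order.TTheory GRing.Theory Num.Theory.

(* Conventions: the paper's index i in [n] = {1..n} is the ordinal i-1 : 'I_n;
   the exponent k in Z_m is an ordinal k : 'I_m (arithmetic mod m).
   A point xi^k i of {xi^k i} is the pair (i, k) : 'I_n * 'I_m. *)

Section Defs.
Variables n m : nat.

Lemma ord_pos (a : 'I_m) : 0 < m.
Proof. exact: leq_ltn_trans (leq0n a) (ltn_ord a). Qed.

Definition oadd (a b : 'I_m) : 'I_m := Ordinal (ltn_pmod (a + b) (ord_pos a)).
Definition oopp (a : 'I_m) : 'I_m := Ordinal (ltn_pmod (m - a) (ord_pos a)).
Definition ozero (hm : 0 < m) : 'I_m := Ordinal hm.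

Definition point := ('I_n * 'I_m)%type.

(* elements (xi^{k_1},...,xi^{k_n}, sigma) of G_{m,n} *)
Definition gsym := ({ffun 'I_n -> 'I_m} * {perm 'I_n})%type.

Definition gapp (a : gsym) (p : point) : point := (a.2 p.1, oadd p.2 (a.1 p.1)).

(* multiplication, exactly the paper's formula; in mathcomp (s * t) i = t (s i),
   which is the composition convention forced by the paper's formula. *)
Definition gmul (a b : gsym) : gsym :=
  ([ffun i => oadd (a.1 i) (b.1 (a.2 i))], (a.2 * b.2)%g).

Definition ginv (a : gsym) : gsym :=
  ([ffun i => oopp (a.1 ((a.2)^-1%g i))], (a.2)^-1%g).

Definition gid (hm : 0 < m) : gsym := ([ffun _ => ozero hm], 1%g).

Definition gen (i j : 'I_n) (k : 'I_m) : gsym :=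
  ([ffun l => if (l == i) || (l == j) then k else ozero (ord_pos k)], tperm i j).

(* one step of the shuffle: ((j, i), k) = (first draw, second draw, orientation) *)
Definition step := ('I_n * 'I_n * 'I_m)%type.

Definition step_gen (s : step) : gsym := gen s.1.2 s.1.1 s.2.

Definition step_weight (s : step) : rat :=
  if (s.1.2 <= s.1.1)%N then (1 / (n * (s.1.1).+1 * m)%:R)%R else 0%R.

Definition path_weight (t : nat) (w : t.-tuple step) : rat :=
  (\prod_(s <- w) step_weight s)%R.

Definition Prob (t : nat) (E : pred (t.-tuple step)) : rat :=
  (\sum_(w : t.-tuple step | E w) path_weight w)%R.

Definition walkX (hm : 0 < m) (w : seq step) : gsym :=
  foldl (fun X s => gmul X (step_gen s)) (gid hm) w.

Definition walkY (hm : 0 < m) (w : seq step) : gsym := ginv (walkX hm w).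

(* T_j: first time (steps numbered 1,2,...) whose first draw equals j;
   equals size w + 1 (i.e. > t) if j is never drawn first within the horizon. *)
Definition hitT (j : 'I_n) (w : seq step) : nat :=
  (find (fun s : step => s.1.1 == j) w).+1.

(* G_j^t, computed from the values y i = Y^t(i) for i > j, using
   Y^t(xi^k i) = xi^k Y^t(i) *)
Definition rot (k : 'I_m) (p : point) : point := (p.1, oadd k p.2).

Definition Gset (j : 'I_n) (y : {ffun 'I_n -> point}) : {set point} :=
  [set p : point | [forall i : 'I_n, forall k : 'I_m,
                      (j < i) ==> (p != rot k (y i))]].

End Defs.

(* Write Y(i) for the value of Y = (X^t)^-1 at xi^0 i.  A shuffle step g acts
   by Y |-> g^-1 Y, which exchanges the entries at the two drawn positions and
   rotates both ([conf_step]).  Call F(c, v) uniform if, for every choice c of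
   the entries above j, F c is constant over the points v whose card differs
   from all cards of the c(l), l > j.  By induction on t, the mass
   P(T_j <= t, Y(l) = c(l) for l > j, Y(j) = v) is uniform.  Steps with first
   draw q < j leave the positions >= j alone.  A step with first draw j moves
   into position j the entry of a uniform position i <= j, uniformly rotated,
   and the positions <= j carry exactly the admissible cards: it makes any mass
   uniform, which is where T_j <= t enters.  For a first draw q > j, second
   draws i > j only permute the positions above j, and the terms with i <= j,
   summed over i and the rotation, no longer depend on v.  So the mass at an
   admissible point is P(C) divided by the number m (j + 1) of such points. *)

From Pilot Require Import Defs.
From mathcomp Require Import all_boot all_order all_algebra all_fingroup.
From mathcomp Require Import ring.
Set Implicit Arguments. Unset Strict Implicit. Unset Printing Implicit Defensive.
Import Order.TTheory GRing.Theory Num.Theory.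
Local Open Scope ring_scope.

Section Zm.
Variable m : nat.
Lemma oaddE (a b : 'I_m.+1) : oadd a b = a + b. Proof. exact: val_inj. Qed.
Lemma ooppE (a : 'I_m.+1) : oopp a = - a. Proof. exact: val_inj. Qed.
Lemma ozeroE (h : (0 < m.+1)%N) : ozero h = 0. Proof. exact: val_inj. Qed.
End Zm.

Lemma tperm_mem (T : finType) (i q l : T) :
  (tperm i q l == i) || (tperm i q l == q) = (l == i) || (l == q).
Proof. by case: tpermP => [->|->|/eqP/negPf-> /eqP/negPf->]; rewrite ?eqxx ?orbT. Qed.

Lemma ltn_ord_neq n (x y : 'I_n) : (x < y)%N -> x != y.
Proof. by move=> xy; rewrite -val_eqE ltn_eqF. Qed.

Lemma gtn_ord_neq n (x y : 'I_n) : (x < y)%N -> y != x.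
Proof. by move=> xy; rewrite eq_sym ltn_ord_neq. Qed.

Section Configuration.
Variables (n m : nat).
Local Notation pt := (point n m.+1).

Definition gconf (Y : gsym n m.+1) (l : 'I_n) : pt := gapp Y (l, 0).

Definition conf_step (s : step n m.+1) (f : 'I_n -> pt) (l : 'I_n) : pt :=
  let: ((q, i), k) := s in
  if (l == i) || (l == q) then Defs.rot (- k) (f (tperm i q l)) else f (tperm i q l).

Lemma gconf_walkY_rcons (hm : (0 < m.+1)%N) (w : seq (step n m.+1)) s :
  gconf (walkY hm (rcons w s)) =1 conf_step s (gconf (walkY hm w)).
Proof.
move=> l; rewrite /walkY /walkX foldl_rcons; set X := foldl _ _ w.
case: s => [[q i] k]; rewrite /gconf /gapp /ginv /gmul /step_gen /gen /=.
rewrite invMg tpermV !ffunE /= permM permKV tperm_mem !oaddE !ooppE !ozeroE.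
by case: ifP => _; rewrite /Defs.rot /= ?oaddE !add0r ?addr0 // opprD addrC.
Qed.

End Configuration.

Lemma sum_tuple_rcons (T : finType) (R : nmodType) t (F : t.+1.-tuple T -> R) :
  \sum_(w : t.+1.-tuple T) F w = \sum_(w : t.-tuple T) \sum_(s : T) F (rcons_tuple w s).
Proof.
rewrite pair_big /=.
have rcons_inj : injective (fun p : t.-tuple T * T => rcons_tuple p.1 p.2).
  by move=> [w s] [w' s'] /(congr1 val)/rcons_inj [/val_inj -> ->].
have card_eq : (#|{: t.+1.-tuple T}| <= #|{: t.-tuple T * T}|)%N.
  by rewrite card_prod !card_tuple expnSr.
by rewrite (reindex _ (onW_bij _ (inj_card_bij rcons_inj card_eq))); apply: eq_bigr => -[].
Qed.

Lemma sum_ord_leq (R : pzSemiRingType) n (j : 'I_n) :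
  \sum_(i : 'I_n) (((i <= j)%N)%:R : R) = j.+1%:R.
Proof.
transitivity (\sum_(i < n | (i < j.+1)%N) (1 : R)).
  by rewrite [RHS]big_mkcond; apply: eq_bigr => i _; rewrite ltnS; case: (i <= j)%N.
by rewrite -(big_ord_widen _ (fun=> 1) (ltn_ord j)) sumr_const card_ord.
Qed.

Lemma sum_indicator_eq (R : pzSemiRingType) (I : finType) (P : pred I) (i0 : I) :
  \sum_(i | P i) ((i == i0)%:R : R) = (P i0)%:R.
Proof.
rewrite big_mkcond (bigD1 i0) //= eqxx big1 ?addr0 => [|i /negPf->]; first by case: (P i0).
by case: (P i).
Qed.

Section Prob.
Variables (n m t : nat).
Local Notation path := (t.-tuple (step n m)).

Lemma Prob_partition (E : pred path) (T : finType) (f : path -> T) :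
  Prob E = \sum_(x : T) Prob (fun w => E w && (f w == x)).
Proof. exact: partition_big. Qed.

Lemma Prob_gt0_witness (E : pred path) : 0 < Prob E -> exists w, E w.
Proof.
move=> PE; case: (pickP E) => [w Ew|E0]; first by exists w.
by move: PE; rewrite /Prob big_pred0 ?ltxx.
Qed.

End Prob.

Section Rotation.
Variables (n m : nat).
Local Notation pt := (point n m.+1).

Lemma rotN_eq (k : 'I_m.+1) (x y : pt) : (Defs.rot (- k) x == y) = (x == Defs.rot k y).
Proof.
case: x y => [x1 x2] [y1 y2]; rewrite /Defs.rot /= !oaddE !xpair_eqE.
by rewrite addrC subr_eq [y2 + k]addrC.
Qed.

Lemma sum_rot (R : nmodType) (F : pt -> R) (v : pt) :
  \sum_(k : 'I_m.+1) F (Defs.rot k v) = \sum_(u : pt | u.1 == v.1) F u.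
Proof.
transitivity (\sum_(p : 'I_n | p == v.1) \sum_(e : 'I_m.+1 | true) F (p, e)); last first.
  by rewrite pair_big_dep; apply: eq_big => -[] //= *; rewrite andbT.
rewrite (big_pred1 v.1) // [RHS](reindex_inj (addIr v.2)) /=.
by apply: eq_bigr => k _; rewrite /Defs.rot oaddE.
Qed.

Lemma sum_rotN_eq (p v : pt) :
  \sum_(k : 'I_m.+1) ((Defs.rot (- k) p == v)%:R : rat) = (p.1 == v.1)%:R.
Proof.
under eq_bigr do rewrite rotN_eq eq_sym.
by rewrite (sum_rot (fun u => (u == p)%:R)) sum_indicator_eq.
Qed.

End Rotation.

Section Conditioning.
Variables (n m : nat) (j : 'I_n).
Local Notation pt := (point n m.+1).
Local Notation config := ('I_n -> pt).

Definition agree_above (f c : config) := [forall l : 'I_n, (j < l)%N ==> (f l == c l)].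

Definition agree_above_but (q : 'I_n) (f c : config) :=
  [forall l : 'I_n, ((j < l)%N && (l != q)) ==> (f l == c l)].

Definition hits (f c : config) (v : pt) := agree_above f c && (f j == v).

Definition admissible (c : config) (v : pt) :=
  [forall l : 'I_n, (j < l)%N ==> ((c l).1 != v.1)].

(* Property P_j of the paper: the admissible points for [c] form G_j ([in_Gset]). *)
Definition uniform (F : config -> pt -> rat) :=
  forall c v v', admissible c v -> admissible c v' -> F c v = F c v'.

Definition upd (c : config) (q : 'I_n) (u : pt) : config :=
  fun l => if l == q then u else c l.

Lemma admissible_rot (c : config) (k : 'I_m.+1) (v : pt) :
  admissible c (Defs.rot k v) = admissible c v.
Proof. by []. Qed.

Lemma admissible_agree (f c : config) (v : pt) :
  agree_above f c -> admissible c v = admissible f v.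
Proof.
move=> /forallP fc; apply: eq_forallb => l.
by case: (ltnP j l) => //= jl; rewrite (eqP (implyP (fc l) jl)).
Qed.

Lemma agree_above_eq (f g c : config) :
  (forall l : 'I_n, (j < l)%N -> f l = g l) -> agree_above f c = agree_above g c.
Proof. by move=> fg; apply: eq_forallb => l; case: (ltnP j l) => //= jl; rewrite fg. Qed.

Lemma agree_above_but_eq (q : 'I_n) (f g c c' : config) :
  (forall l : 'I_n, (j < l)%N -> l != q -> f l = g l /\ c l = c' l) ->
  agree_above_but q f c = agree_above_but q g c'.
Proof.
move=> fg; apply: eq_forallb => l.
by case: (ltnP j l) (eqVneq l q) => //= jl [//|lq]; case: (fg l jl lq) => -> ->.
Qed.

Lemma agree_above_split (q : 'I_n) (f c : config) : (j < q)%N ->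
  agree_above f c = agree_above_but q f c && (f q == c q).
Proof.
move=> jq; apply/forallP/andP => [fc|[/forallP fc fcq] l].
  split; last exact: implyP (fc q) jq.
  by apply/forallP => l; apply/implyP => /andP[jl _]; apply: implyP (fc l) jl.
by apply/implyP => jl; case: (eqVneq l q) => [->//|lq]; apply: implyP (fc l) _; rewrite jl.
Qed.

Lemma hits_upd (q : 'I_n) (f c : config) (u v : pt) : (j < q)%N ->
  hits f (upd c q u) v = (agree_above_but q f c && (f j == v)) && (f q == u).
Proof.
move=> jq; rewrite /hits (agree_above_split _ _ jq) /upd eqxx andbAC.
by congr (_ && _ && _); apply: agree_above_but_eq => l _ /negPf->.
Qed.

Lemma conf_stepD (q i : 'I_n) (k : 'I_m.+1) (f : config) (l : 'I_n) :
  l != i -> l != q -> conf_step ((q, i), k) f l = f l.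
Proof. by move=> li lq; rewrite /conf_step (negPf li) (negPf lq) tpermD // eq_sym. Qed.

Lemma conf_stepL (q i : 'I_n) (k : 'I_m.+1) (f : config) :
  conf_step ((q, i), k) f i = Defs.rot (- k) (f q).
Proof. by rewrite /conf_step eqxx tpermL. Qed.

Lemma conf_stepR (q i : 'I_n) (k : 'I_m.+1) (f : config) :
  conf_step ((q, i), k) f q = Defs.rot (- k) (f i).
Proof. by rewrite /conf_step eqxx orbT tpermR. Qed.

Lemma hits_step_below (q i : 'I_n) (k : 'I_m.+1) (f c : config) (v : pt) :
  (i < j)%N -> (q < j)%N ->
  hits (conf_step ((q, i), k) f) c v = hits f c v.
Proof.
move=> ij qj; rewrite /hits conf_stepD ?(gtn_ord_neq ij) ?(gtn_ord_neq qj) //.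
congr (_ && _); apply: agree_above_eq => l jl.
by rewrite conf_stepD // gtn_ord_neq // ?(ltn_trans ij jl) ?(ltn_trans qj jl).
Qed.

Lemma forall_above_tperm (i q : 'I_n) (P : pred 'I_n) : (j < i)%N -> (j < q)%N ->
  [forall l : 'I_n, (j < l)%N ==> P (tperm i q l)] = [forall l : 'I_n, (j < l)%N ==> P l].
Proof.
move=> ji jq; have jt l : (j < tperm i q l)%N = (j < l)%N.
  by case: tpermP => [->|->|//]; rewrite ?ji ?jq.
apply/forallP/forallP => P_ l; apply/implyP => jl; last by apply: implyP (P_ _) _; rewrite jt.
by rewrite -(tpermK i q l); apply: implyP (P_ _) _; rewrite jt.
Qed.

Lemma hits_step_above (q i : 'I_n) (k : 'I_m.+1) (f c : config) (v : pt) :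
  (j < i)%N -> (j < q)%N ->
  hits (conf_step ((q, i), k) f) c v = hits f (conf_step ((q, i), - k) c) v.
Proof.
move=> ji jq; rewrite /hits conf_stepD ?(ltn_ord_neq ji) ?(ltn_ord_neq jq) //.
congr (_ && _).
rewrite /agree_above -(forall_above_tperm (fun l => conf_step _ f l == c l) ji jq).
apply: eq_forallb => l; rewrite /conf_step tperm_mem tpermK opprK.
by case: ifP => // _; rewrite rotN_eq.
Qed.

Lemma admissible_step_above (q i : 'I_n) (k : 'I_m.+1) (c : config) (v : pt) :
  (j < i)%N -> (j < q)%N ->
  admissible (conf_step ((q, i), k) c) v = admissible c v.
Proof.
move=> ji jq; rewrite /admissible -(forall_above_tperm (fun l => (c l).1 != v.1) ji jq).
by apply: eq_forallb => l; rewrite /conf_step; case: ifP.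
Qed.

Lemma hits_ext (f g : config) : f =1 g -> forall c v, hits f c v = hits g c v.
Proof. by move=> fg c v; rewrite /hits fg; congr (_ && _); apply: agree_above_eq. Qed.

Lemma hits_step_at (i : 'I_n) (k : 'I_m.+1) (f c : config) (v : pt) : (i <= j)%N ->
  hits (conf_step ((j, i), k) f) c v = agree_above f c && (Defs.rot (- k) (f i) == v).
Proof.
move=> ij; rewrite /hits conf_stepR; congr (_ && _).
apply: agree_above_eq => l jl.
by rewrite conf_stepD // gtn_ord_neq // (leq_ltn_trans ij jl).
Qed.

Lemma hits_step_cross (q i : 'I_n) (k : 'I_m.+1) (f c : config) (v : pt) :
  (i < j)%N -> (j < q)%N ->
  hits (conf_step ((q, i), k) f) c v =
  (agree_above_but q f c && (f j == v)) && (Defs.rot (- k) (f i) == c q).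
Proof.
move=> ij jq; rewrite /hits (agree_above_split _ _ jq) conf_stepR.
rewrite conf_stepD ?(gtn_ord_neq ij) ?(ltn_ord_neq jq) // andbAC; congr (_ && _ && _).
apply: agree_above_but_eq => l jl lq; split=> //.
by rewrite conf_stepD // gtn_ord_neq // (ltn_trans ij jl).
Qed.

Lemma hits_step_swap (q : 'I_n) (k : 'I_m.+1) (f c : config) (v : pt) : (j < q)%N ->
  hits (conf_step ((q, j), k) f) c v = hits f (upd c q (Defs.rot k v)) (Defs.rot k (c q)).
Proof.
move=> jq; rewrite hits_upd // /hits (agree_above_split _ _ jq).
rewrite conf_stepL conf_stepR !rotN_eq; congr (_ && _ && _).
by apply: agree_above_but_eq => l jl lq; rewrite conf_stepD // gtn_ord_neq.
Qed.

Lemma admissible_upd (q : 'I_n) (c : config) (u x : pt) :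
  admissible c x -> u.1 != x.1 -> admissible (upd c q u) x.
Proof.
by move=> /forallP adm ux; apply/forallP => l; rewrite /upd; case: ifP; rewrite ?ux ?implybT.
Qed.

Lemma admissible_upd_clash (q : 'I_n) (c : config) (u x : pt) :
  (j < q)%N -> u.1 = x.1 -> ~~ admissible (upd c q u) x.
Proof. by move=> jq ux; apply/forallP => /(_ q); rewrite jq /upd eqxx ux eqxx. Qed.

Lemma sum_uniform (F : config -> pt -> rat) (c : config) (v : pt) :
  uniform F -> (forall x, ~~ admissible c x -> F c x = 0) -> admissible c v ->
  \sum_(x : pt) F c x = (\sum_(x : pt) (admissible c x)%:R) * F c v.
Proof.
move=> unif F0 adm; rewrite mulr_suml; apply: eq_bigr => x _.
by have [ax|nax] := boolP (admissible c x); [rewrite mul1r; apply: unif | rewrite mul0r F0].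
Qed.

End Conditioning.

Section Arrangements.
Variables (n m : nat) (j : 'I_n).
Local Notation pt := (point n m.+1).
Local Notation config := ('I_n -> pt).
Local Notation agree_above := (agree_above j).
Local Notation agree_above_but := (agree_above_but j).
Local Notation hits := (hits j).
Local Notation admissible := (admissible j).
Local Notation uniform := (uniform j).

Lemma admissible_gconf (Y : gsym n m.+1) (v : pt) :
  admissible (gconf Y) v = ((Y.2^-1)%g v.1 <= j)%N.
Proof.
apply/forallP/idP => [adm|le_j l]; last first.
  by apply/implyP=> jl; apply: contraTneq le_j => <-; rewrite /= permK -ltnNge.
rewrite leqNgt; apply/negP => jl.
by have := implyP (adm _) jl; rewrite /= permKV eqxx.
Qed.

Lemma hits_admissible (Y : gsym n m.+1) (c : config) (v : pt) :
  hits (gconf Y) c v -> admissible c v.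
Proof.
case/andP => agree /eqP <-; rewrite (admissible_agree _ agree) admissible_gconf /=.
by rewrite permK.
Qed.

Lemma sum_gconf_rotN (Y : gsym n m.+1) (P : pred 'I_n) (v : pt) :
  \sum_(i | P i) \sum_(k : 'I_m.+1) ((Defs.rot (- k) (gconf Y i) == v)%:R : rat) =
  (P ((Y.2^-1)%g v.1))%:R.
Proof.
under eq_bigr do rewrite sum_rotN_eq /= (can2_eq (permK Y.2) (permKV Y.2)).
exact: sum_indicator_eq.
Qed.

Lemma sum_admissible (Y : gsym n m.+1) (c : config) :
  agree_above (gconf Y) c ->
  \sum_(x : pt) ((admissible c x)%:R : rat) = (m.+1 * j.+1)%:R.
Proof.
move=> agree; under eq_bigr do rewrite (admissible_agree _ agree) admissible_gconf.
transitivity (\sum_(p : 'I_n) \sum_(e : 'I_m.+1) ((((Y.2^-1)%g p <= j)%N)%:R : rat)).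
  by rewrite pair_big; apply: eq_bigr => -[].
under eq_bigr do rewrite sumr_const card_ord.
rewrite sumrMnl (reindex_inj (@perm_inj _ Y.2)) /=.
under eq_bigr do rewrite permK.
by rewrite sum_ord_leq mulnC natrM mulr_natr.
Qed.

Lemma in_Gset (y : {ffun 'I_n -> pt}) (x : pt) : (x \in Gset j y) = admissible y x.
Proof.
rewrite inE; apply/forallP/forallP => [G i|adm i]; last first.
  apply/forallP => k; apply/implyP => ji.
  by apply: contraTneq (implyP (adm i) ji) => ->; rewrite eqxx.
apply/implyP => ji; move: (implyP (forallP (G i) (x.2 - (y i).2)) ji).
by apply: contra_neq => yx; rewrite /Defs.rot oaddE subrK yx -surjective_pairing.
Qed.

Lemma sum_hits_step_at (Y : gsym n m.+1) (c : config) (v : pt) :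
  \sum_(i : 'I_n | (i <= j)%N) \sum_(k : 'I_m.+1)
      ((hits (conf_step ((j, i), k) (gconf Y)) c v)%:R : rat) =
  (agree_above (gconf Y) c && admissible c v)%:R.
Proof.
under eq_bigr => i ij do under eq_bigr => k _ do rewrite hits_step_at // -mulnb natrM.
under eq_bigr do rewrite -mulr_sumr.
rewrite -mulr_sumr sum_gconf_rotN.
case agree: (agree_above _ c); last by rewrite mul0r.
by rewrite mul1r (admissible_agree _ agree) admissible_gconf.
Qed.

Lemma sum_hits_step_cross (Y : gsym n m.+1) (q : 'I_n) (c : config) (v : pt) :
  (j < q)%N -> admissible c v ->
  \sum_(i : 'I_n | (i < j)%N) \sum_(k : 'I_m.+1)
      ((hits (conf_step ((q, i), k) (gconf Y)) c v)%:R : rat) =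
  \sum_(u : pt | admissible (upd c q u) (c q)) ((hits (gconf Y) (upd c q u) v)%:R : rat).
Proof.
move=> jq adm; set f := gconf Y.
under eq_bigr => i ij do under eq_bigr => k _ do rewrite hits_step_cross // -mulnb natrM.
under eq_bigr do rewrite -mulr_sumr.
rewrite -mulr_sumr sum_gconf_rotN.
under [RHS]eq_bigr => u _ do rewrite hits_upd // -mulnb natrM [f q == _]eq_sym.
rewrite -mulr_sumr sum_indicator_eq.
case/boolP: (agree_above_but q f c && (f j == v)) => [/andP[but /eqP fj]|_]; last by rewrite !mul0r.
have agree : agree_above f (upd c q (f q)).
  rewrite (agree_above_split _ _ jq) /upd !eqxx andbT.
  by rewrite (agree_above_but_eq (g := f) (c' := c)) // => l _ /negPf->.
have ne_j : (Y.2^-1)%g (c q).1 != j.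
  rewrite (can2_eq (permKV _) (permK _)) -[Y.2 j]/((f j).1) fj.
  exact: implyP (forallP adm q) jq.
rewrite (admissible_agree _ agree) admissible_gconf ltn_neqAle.
by rewrite val_eqE ne_j.
Qed.

Definition first_draw_sum (G : step n m.+1 -> rat) (q : 'I_n) : rat :=
  \sum_(i : 'I_n | (i <= q)%N) \sum_(k : 'I_m.+1) G ((q, i), k).

Section Family.
Variables (A : finType) (om : A -> rat) (Y : A -> gsym n m.+1).

Definition mass (cf : A -> config) (c : config) (v : pt) : rat :=
  \sum_(a : A) om a * (hits (cf a) c v)%:R.

Local Notation massY := (mass (fun a => gconf (Y a))).
Local Notation mass_after s := (mass (fun a => conf_step s (gconf (Y a)))).

Lemma mass_inadmissible (c : config) (v : pt) : ~~ admissible c v -> massY c v = 0.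
Proof.
by move=> nadm; apply: big1 => a _; rewrite (contraNF (@hits_admissible _ _ _) nadm) mulr0.
Qed.

Lemma mass_rot (c : config) (k : 'I_m.+1) (v : pt) :
  uniform massY -> massY c (Defs.rot k v) = massY c v.
Proof.
move=> unif; have [adm|nadm] := boolP (admissible c v).
  by apply: unif; rewrite ?admissible_rot.
by rewrite !mass_inadmissible ?admissible_rot.
Qed.

Lemma mass_after_below (q i : 'I_n) (k : 'I_m.+1) (c : config) (v : pt) :
  (i < j)%N -> (q < j)%N -> mass_after ((q, i), k) c v = massY c v.
Proof. by move=> ij qj; apply: eq_bigr => a _; rewrite hits_step_below. Qed.

Lemma mass_after_above (q i : 'I_n) (k : 'I_m.+1) (c : config) (v : pt) :
  (j < i)%N -> (j < q)%N ->
  mass_after ((q, i), k) c v = massY (conf_step ((q, i), - k) c) v.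
Proof. by move=> ji jq; apply: eq_bigr => a _; rewrite hits_step_above. Qed.

Lemma sum_mass_after (P : pred 'I_n) (q : 'I_n) (c : config) (v : pt) :
  \sum_(i | P i) \sum_(k : 'I_m.+1) mass_after ((q, i), k) c v =
  \sum_(a : A) om a * \sum_(i | P i) \sum_(k : 'I_m.+1)
      (hits (conf_step ((q, i), k) (gconf (Y a))) c v)%:R.
Proof.
rewrite /mass; under eq_bigr do rewrite exchange_big; rewrite exchange_big.
by apply: eq_bigr => a _; rewrite mulr_sumr; apply: eq_bigr => i _; rewrite mulr_sumr.
Qed.

Lemma first_draw_sum_j (c : config) (v : pt) :
  first_draw_sum (fun s => mass_after s c v) j =
  (admissible c v)%:R * \sum_(a : A) om a * (agree_above (gconf (Y a)) c)%:R.
Proof.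
rewrite /first_draw_sum sum_mass_after mulr_sumr; apply: eq_bigr => a _.
by rewrite sum_hits_step_at andbC -mulnb natrM mulrCA.
Qed.

(* The steps (q, i, k) with i < j put at position q an entry whose card lies
   below j, those with i = j put there the rotated entry v of position j;
   indexed by the new entry u at q, they cover each u once. *)
Lemma sum_mass_after_low (q : 'I_n) (c : config) (v : pt) :
  uniform massY -> (j < q)%N -> admissible c v ->
  \sum_(i : 'I_n | (i <= j)%N) \sum_(k : 'I_m.+1) mass_after ((q, i), k) c v =
  \sum_(u : pt) massY (upd c q u) (c q).
Proof.
move=> unif jq adm.
rewrite (bigD1 j) //= (eq_bigl (fun i : 'I_n => (i < j)%N)) => [|i]; last first.
  by rewrite ltn_neqAle val_eqE andbC.
have -> : \sum_(k : 'I_m.+1) mass_after ((q, j), k) c v =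
          \sum_(u : pt | u.1 == v.1) massY (upd c q u) (c q).
  rewrite -(sum_rot (fun u => massY (upd c q u) (c q))).
  apply: eq_bigr => k _; rewrite -(mass_rot _ k _ unif).
  by apply: eq_bigr => a _; rewrite hits_step_swap.
have -> : \sum_(i : 'I_n | (i < j)%N) \sum_(k : 'I_m.+1) mass_after ((q, i), k) c v =
          \sum_(u : pt | admissible (upd c q u) (c q)) massY (upd c q u) v.
  rewrite sum_mass_after /mass exchange_big; apply: eq_bigr => a _.
  by rewrite sum_hits_step_cross // mulr_sumr.
rewrite [RHS](bigID (fun u : pt => u.1 == v.1)) /=; congr (_ + _).
rewrite big_mkcond [RHS]big_mkcond; apply: eq_bigr => u _.
case: (eqVneq u.1 v.1) => [uv|uv] /=.
  by rewrite mass_inadmissible ?admissible_upd_clash // if_same.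
case: ifP => [adm_q|/negbT nadm_q]; last by rewrite mass_inadmissible.
by apply: unif => //; apply: admissible_upd.
Qed.

Lemma uniform_first_draw_sum (q : 'I_n) :
  uniform massY -> uniform (fun c v => first_draw_sum (fun s => mass_after s c v) q).
Proof.
move=> unif c v v' adm adm'.
case: (ltngtP q j) => [qj|jq|/val_inj->]; last by rewrite !first_draw_sum_j adm adm'.
  apply: eq_bigr => i iq; apply: eq_bigr => k _.
  have iqj := leq_ltn_trans iq qj.
  by rewrite [LHS]mass_after_below // [RHS]mass_after_below //; apply: unif.
pose low (i : 'I_n) := (i <= j)%N.
rewrite /first_draw_sum [LHS](bigID low) [RHS](bigID low) /=.
have low_j (i : 'I_n) : ((i <= q) && (i <= j))%N = (i <= j)%N.
  by apply/andb_idl => /leq_trans; apply; apply: ltnW.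
rewrite !(eq_bigl _ _ low_j) !sum_mass_after_low //; congr (_ + _).
apply: eq_bigr => i /andP[_]; rewrite -ltnNge => ji; apply: eq_bigr => k _.
rewrite [LHS]mass_after_above // [RHS]mass_after_above //.
by apply: unif; rewrite admissible_step_above.
Qed.

End Family.
End Arrangements.

Section Walk.
Variables (n m : nat) (hm : (0 < m.+1)%N) (j : 'I_n).
Local Notation pt := (point n m.+1).
Local Notation stp := (step n m.+1).
Local Notation uniform := (uniform j).
Local Notation mass := (mass j).

Definition drawn (w : seq stp) := has (fun s : stp => s.1.1 == j) w.

Definition walk_weight (t : nat) (b : bool) (w : t.-tuple stp) : rat :=
  path_weight w * (drawn w == b)%:R.

Definition walk_mass (t : nat) (b : bool) : ('I_n -> pt) -> pt -> rat :=
  mass (@walk_weight t b) (fun w => gconf (walkY hm w)).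

Local Notation walk_mass_after t b s :=
  (mass (@walk_weight t b) (fun w => conf_step s (gconf (walkY hm w)))).

Lemma sum_step_weight (G : stp -> rat) :
  \sum_(s : stp) step_weight s * G s =
  \sum_(q : 'I_n) (n * q.+1 * m.+1)%:R^-1 * first_draw_sum G q.
Proof.
transitivity (\sum_(p : 'I_n * 'I_n) \sum_(k : 'I_m.+1) step_weight (p, k) * G (p, k)).
  by rewrite pair_big; apply: eq_bigr => -[].
transitivity (\sum_(q : 'I_n) \sum_(i : 'I_n) \sum_(k : 'I_m.+1)
                step_weight ((q, i), k) * G ((q, i), k)).
  by rewrite [RHS]pair_big; apply: eq_big => // -[].
apply: eq_bigr => q _; rewrite /first_draw_sum mulr_sumr [RHS]big_mkcond; apply: eq_bigr => i _ /=.
rewrite /step_weight /=; case: ifP => _; last by rewrite big1 // => k _; rewrite mul0r.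
by rewrite mulr_sumr div1r.
Qed.

Lemma walk_mass_succ t c v :
  walk_mass t.+1 true c v =
  \sum_(q : 'I_n) (n * q.+1 * m.+1)%:R^-1 *
    (first_draw_sum (fun s => walk_mass_after t true s c v) q +
     (q == j)%:R * first_draw_sum (fun s => walk_mass_after t false s c v) q).
Proof.
transitivity (\sum_(s : stp) step_weight s *
  (walk_mass_after t true s c v + (s.1.1 == j)%:R * walk_mass_after t false s c v)).
  rewrite /walk_mass /mass sum_tuple_rcons exchange_big; apply: eq_bigr => s _.
  rewrite mulr_sumr -big_split mulr_sumr; apply: eq_bigr => w _.
  rewrite (hits_ext j (gconf_walkY_rcons hm w s)) /walk_weight /path_weight /drawn.
  rewrite big_rcons has_rcons /=.
  by case: (s.1.1 == j); case: (has _ w) => /=; ring.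
rewrite sum_step_weight; apply: eq_bigr => q _; congr (_ * _).
rewrite /first_draw_sum mulr_sumr -big_split; apply: eq_bigr => i _.
by rewrite mulr_sumr -big_split.
Qed.

Lemma uniform_walk_mass t : uniform (walk_mass t true).
Proof.
elim: t => [|t IH] c v v' adm adm'.
  by rewrite /walk_mass /mass !big1 // => w _; rewrite tuple0 /walk_weight mulr0 mul0r.
rewrite !walk_mass_succ; apply: eq_bigr => q _; congr (_ * (_ + _)).
  exact: (uniform_first_draw_sum (om := @walk_weight t true) (Y := walkY hm) q IH adm adm').
case: eqP => [->|_]; last by rewrite !mul0r.
by rewrite !first_draw_sum_j adm adm'.
Qed.

Lemma Prob_walk_mass t (c : 'I_n -> pt) (v : pt) :
  Prob (fun w : t.-tuple stp =>
    ((hitT j w <= t)%N && agree_above j (gconf (walkY hm w)) c) &&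
    (gconf (walkY hm w) j == v)) = walk_mass t true c v.
Proof.
rewrite /Prob /walk_mass /mass big_mkcond; apply: eq_bigr => w _.
have -> : (hitT j w <= t)%N = drawn w by rewrite /drawn has_find size_tuple.
rewrite /walk_weight /hits -andbA.
by case: (drawn w); case: (agree_above _ _ _ && _); rewrite /= ?mulr1 ?mulr0 ?mul0r.
Qed.

End Walk.

Theorem proposition4p6 (n m : nat) (hm : (0 < m)%N) (t : nat) (j : 'I_n)
    (y : {ffun 'I_n -> point n m}) (x : point n m) :
  let C := fun w : t.-tuple (step n m) =>
    ((hitT j w <= t)%N &&
     [forall i : 'I_n, (j < i)%N ==> (gapp (walkY hm w) (i, ozero hm) == y i)]) in
  0 < Prob C ->
  Prob (fun w => C w && (gapp (walkY hm w) (j, ozero hm) == x)) / Prob C =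
  (if x \in Gset j y then 1 / (m * (j.+1))%:R else 0).
Proof.
case: m hm y x => [//|m] hm y x; rewrite ozeroE => C PC.
have [w0 /andP[_ agree0]] := Prob_gt0_witness PC.
have vanish x' : ~~ admissible j y x' -> walk_mass hm j t true y x' = 0.
  exact: mass_inadmissible.
have -> : Prob (fun w => C w && (gapp (walkY hm w) (j, 0) == x)) =
          walk_mass hm j t true y x := Prob_walk_mass hm j t y x.
have total : Prob C = \sum_(x' : point n m.+1) walk_mass hm j t true y x'.
  rewrite (Prob_partition C (fun w => gapp (walkY hm w) (j, 0))).
  by apply: eq_bigr => x' _; apply: Prob_walk_mass.
rewrite in_Gset; have [adm|nadm] := boolP (admissible j y x); last first.
  by rewrite vanish ?mul0r.
rewrite total (sum_uniform (@uniform_walk_mass _ _ hm j t) vanish adm) in PC *.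
rewrite (sum_admissible agree0) in PC *.
rewrite invfM mulrCA divff ?mulr1 ?div1r //.
by apply: contraTneq PC => ->; rewrite mulr0 ltxx.
Qed.
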